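(* Let $F$ be any field, $N\in\mathbb{N}$, and $p,p'\in\mathbb{N}$ with $p+p'\le N+1$. Let $r\in\mathbb{N}$ satisfy $r+1\le p$ and $r+1\le p'$. Let $x\in F^{N+1}$. Then $\operatorname{rank}(H_{p,p'-1}(x))\le r$ if and only if $\operatorname{rank}(H_{p-1,p'}(x))\le r$.
   Context: $\mathbb{N}=\{0,1,2,\ldots\}$. For $N\in\mathbb{N}$, $x=(x_0,\ldots,x_N)\in F^{N+1}$ and integers $s,t\ge -1$ with $s+t\le N$, the Hankel matrix $H_{s,t}(x)$ is the $(s+1)\times(t+1)$ matrix $(x_{i+j})_{0\le i\le s,\,0\le j\le t}$. *)

From HB Require Import structures.
From mathcomp Require Import all_boot all_order all_algebra.
Set Implicit Arguments. Unset Strict Implicit. Unset Printing Implicit Defensive.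
Import GRing.Theory.
Local Open Scope ring_scope.

(* Hankel matrix H_{s,t}(x) = (x_{i+j})_{0<=i<=s, 0<=j<=t}, an
   (s+1) x (t+1) matrix; meaningful when s + t <= N (otherwise indices
   beyond N are clamped by inord, but we only use it with s + t <= N). *)
Definition hankel (F : fieldType) (N : nat) (s t : nat) (x : 'rV[F]_N.+1)
  : 'M[F]_(s.+1, t.+1) :=
  \matrix_(i < s.+1, j < t.+1) x ord0 (inord (i + j)).

From mathcomp Require Import all_boot all_order all_algebra.
From mathcomp Require Import zify.

(* For a sequence f, write H_f(s,t) for the (s+1) x (t+1) matrix (f (i+j)).
   The core fact (rank_hankel_shift) is: if H_f(s,t+1) has a nonzero left
   kernel K, i.e. rank H_f(s,t+1) < s+1, then
   rank H_f(s+1,t) <= rank H_f(s,t+1).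
   Each row u of K gives two left-kernel vectors of H_f(s+1,t): u padded with
   a trailing zero and u padded with a leading zero, because deleting the last
   (resp. first) row of H_f(s+1,t) yields the first (resp. last) t+1 columns
   of H_f(s,t+1).  Padding is injective, and the leading-zero copies are not
   all in the span of the trailing-zero copies (look at the last nonzero
   column of K), so the left kernel of H_f(s+1,t) has dimension > dim K, which
   is exactly the rank inequality.  Applying the fact to the matrix and to its
   transpose (transposing a Hankel matrix swaps s and t) gives both directions
   of lemma9. *)

Set Implicit Arguments.
Unset Strict Implicit.
Unset Printing Implicit Defensive.

Import GRing.Theory.
Local Open Scope ring_scope.

Section HankelRank.
Variable F : fieldType.

Definition pad_end n : 'M[F]_(n.+1, n.+2) :=
  \matrix_(i, j) ((i : nat) == j)%:R.
Definition pad_front n : 'M[F]_(n.+1, n.+2) :=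
  \matrix_(i, j) ((i.+1 : nat) == j)%:R.

Lemma pad_end_mul n p (A : 'M[F]_(n.+2, p)) :
  pad_end n *m A = \matrix_(i, j) A (widen_ord (leqnSn _) i) j.
Proof.
apply/matrixP => i j.
rewrite !mxE (bigD1 (widen_ord (leqnSn _) i)) //= mxE eqxx mul1r.
rewrite big1 ?addr0 // => k ki; rewrite mxE.
case: eqP => [ik|]; last by rewrite mul0r.
by case/eqP: ki; apply: val_inj; rewrite /= ik.
Qed.

Lemma pad_front_mul n p (A : 'M[F]_(n.+2, p)) :
  pad_front n *m A = \matrix_(i, j) A (lift ord0 i) j.
Proof.
apply/matrixP => i j; rewrite !mxE (bigD1 (lift ord0 i)) //= mxE eqxx mul1r.
rewrite big1 ?addr0 // => k ki; rewrite mxE.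
case: eqP => [ik|]; last by rewrite mul0r.
by case/eqP: ki; apply: val_inj; rewrite /= -ik.
Qed.

(* pad_end is left invertible, so padding does not decrease rank. *)
Lemma pad_end_tr n : pad_end n *m (pad_end n)^T = 1%:M.
Proof. by apply/matrixP => i j; rewrite pad_end_mul !mxE eq_sym. Qed.

Lemma mul_pad_end m n (A : 'M[F]_(m, n.+1)) i j :
  (A *m pad_end n) i j = \sum_(k < n.+1 | (k : nat) == j) A i k.
Proof.
rewrite mxE [RHS]big_mkcond; apply: eq_bigr => k _.
by rewrite mxE; case: (_ == _); rewrite ?mulr1 ?mulr0.
Qed.

Lemma mul_pad_front m n (A : 'M[F]_(m, n.+1)) i j :
  (A *m pad_front n) i j = \sum_(k < n.+1 | (k.+1 : nat) == j) A i k.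
Proof.
rewrite mxE [RHS]big_mkcond; apply: eq_bigr => k _.
by rewrite mxE; case: (_ == _); rewrite ?mulr1 ?mulr0.
Qed.

(* For K != 0, the front-padded rows of K are not in the span of the
   end-padded rows: if d is the last nonzero column of K, every end-padded
   row vanishes at coordinate d+1 while some front-padded row does not. *)
Lemma pad_front_notin_pad_end m n (K : 'M[F]_(m, n.+1)) :
  K != 0 -> ~~ (K *m pad_front n <= K *m pad_end n)%MS.
Proof.
case/matrix0Pn => i0 [j0 nz0].
pose nzcol j := [exists i, K i j != 0].
have nzcol_j0 : nzcol j0 by apply/existsP; exists i0.
have [d /existsP[i nzd] dmax] :=
  arg_maxnP (fun j : 'I_n.+1 => j : nat) nzcol_j0.
have zero_beyond (k : 'I_n.+1) : (d < k)%N -> K^~ k =1 (fun=> 0).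
  move=> dk l; apply/eqP; apply: contraTT dk => nz.
  by rewrite -leqNgt; apply: dmax; apply/existsP; exists l.
apply/negP => /submxP[D /matrixP/(_ i (lift ord0 d))].
rewrite mul_pad_front (big_pred1 d) => [|k]; last by rewrite /= eqSS.
rewrite mxE big1 => [|l _]; first by move/eqP; rewrite (negbTE nzd).
rewrite mul_pad_end big1 ?mulr0 // => k /eqP kd.
by apply: zero_beyond; rewrite kd /=.
Qed.

Definition hankel_of (f : nat -> F) s t : 'M[F]_(s.+1, t.+1) :=
  \matrix_(i < s.+1, j < t.+1) f (i + j)%N.

Lemma hankel_of_tr f s t : (hankel_of f s t)^T = hankel_of f t s.
Proof. by apply/matrixP => i j; rewrite !mxE addnC. Qed.

Lemma pad_end_hankel f s t : pad_end s *m hankel_of f s.+1 t = hankel_of f s t.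
Proof. by apply/matrixP => i j; rewrite pad_end_mul !mxE. Qed.

Lemma pad_front_hankel f s t :
  pad_front s *m hankel_of f s.+1 t = hankel_of (fun k => f k.+1) s t.
Proof. by apply/matrixP => i j; rewrite pad_front_mul !mxE. Qed.

Lemma hankel_pad_end f s t :
  hankel_of f s t.+1 *m (pad_end t)^T = hankel_of f s t.
Proof.
by rewrite -[LHS]trmxK trmx_mul trmxK hankel_of_tr pad_end_hankel hankel_of_tr.
Qed.

Lemma hankel_pad_front f s t :
  hankel_of f s t.+1 *m (pad_front t)^T = hankel_of (fun k => f k.+1) s t.
Proof.
rewrite -[LHS]trmxK trmx_mul trmxK hankel_of_tr.
by rewrite pad_front_hankel hankel_of_tr.
Qed.

Lemma rank_hankel_shift f s t :
  (\rank (hankel_of f s t.+1) < s.+1)%N ->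
  (\rank (hankel_of f s.+1 t) <= \rank (hankel_of f s t.+1))%N.
Proof.
set H1 := hankel_of f s t.+1; set H2 := hankel_of f s.+1 t => rH1.
pose K := kermx H1.
have K0 : K *m pad_end s *m H2 = 0.
  by rewrite -mulmxA pad_end_hankel -hankel_pad_end mulmxA mulmx_ker mul0mx.
have K1 : K *m pad_front s *m H2 = 0.
  by rewrite -mulmxA pad_front_hankel -hankel_pad_front mulmxA mulmx_ker mul0mx.
have Knz : K != 0 by rewrite -mxrank_eq0 mxrank_ker subn_eq0 -ltnNge.
have sub_ker : (K *m pad_end s + K *m pad_front s <= kermx H2)%MS.
  by rewrite addsmx_sub !sub_kermx K0 K1 eqxx.
have lt_sum : (K *m pad_end s < K *m pad_end s + K *m pad_front s)%MS.
  rewrite ltmxE addsmxSl /=.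
  apply/negP => /(submx_trans (addsmxSr _ _)); apply/negP.
  exact: pad_front_notin_pad_end.
have rK : (\rank K <= \rank (K *m pad_end s))%N.
  by rewrite -{1}[K]mulmx1 -pad_end_tr mulmxA mxrankM_maxl.
have := leq_trans (rank_ltmx lt_sum) (mxrankS sub_ker).
move: rK; rewrite !mxrank_ker; have := rank_leq_row H2; lia.
Qed.

Lemma rank_hankel_of_tr (f : nat -> F) s t :
  \rank (hankel_of f s t) = \rank (hankel_of f t s).
Proof. by rewrite -mxrank_tr hankel_of_tr. Qed.

End HankelRank.

Lemma hankelE (F : fieldType) (N s t : nat) (x : 'rV[F]_N.+1) :
  hankel s t x = hankel_of (fun k => x ord0 (inord k)) s t.
Proof. by []. Qed.

Theorem lemma9 (F : fieldType) (N p p' r : nat) (x : 'rV[F]_N.+1) :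
  (p + p' <= N + 1)%N -> (r + 1 <= p)%N -> (r + 1 <= p')%N ->
  ((\rank (hankel p (p' - 1) x) <= r)%N <->
   (\rank (hankel (p - 1) p' x) <= r)%N).
Proof.
move=> _ hp hp'.
case: p hp => [|a] hp; first by rewrite addn1 in hp.
case: p' hp' => [|b] hp'; first by rewrite addn1 in hp'.
have ra : (r < a.+1)%N by rewrite -addn1.
have rb : (r < b.+1)%N by rewrite -addn1.
rewrite !subn1 /= !hankelE; split => h.
- rewrite rank_hankel_of_tr; rewrite rank_hankel_of_tr in h.
  exact: leq_trans (rank_hankel_shift (leq_ltn_trans h rb)) h.
- exact: leq_trans (rank_hankel_shift (leq_ltn_trans h ra)) h.
Qed.
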